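(* For any $X\in\mathcal C^\infty\mathrm{Sch}$ there is a morphism of presheaves $N_{\mathrm{alg}}(\Delta_X)\to N_\infty(\Delta_X)$ commuting with the canonical morphisms of both to $h_X\times h_X$.
   Context: A $C^\infty$-ring is a product-preserving functor from the category of $\mathbb R^n$ ($n\ge0$) and smooth maps to sets; $\mathcal C^\infty\mathrm{Sch}$ is the opposite category, $X=\mathrm{Spec}(C^\infty(X))$, $C^\infty(X\times X)=C^\infty(X)\otimes_\infty C^\infty(X)$; ideals are ideals of the underlying $\mathbb R$-algebra; $A\{a^{-1}\}$ is the universal $C^\infty$-ring inverting $a$; $\sqrt I$ is the nilradical and $\sqrt[\infty]{I}:=\{f\mid (A/I)\{f^{-1}\}\cong0\}$. $I_\Delta$ is the kernel of the codiagonal $C^\infty(X\times X)\to C^\infty(X)$. Presheaves are functors from $C^\infty$-rings to sets; $h_Y=\mathrm{Hom}(C^\infty(Y),-)$. $N_{\mathrm{alg}}(\Delta_X):=\mathrm{colim}\,\mathrm{Hom}(C^\infty(X\times X)/I,-)$ over ideals $I$ with $\sqrt I=\sqrt{I_\Delta}$, and $N_\infty(\Delta_X)$ the same over ideals with $\sqrt[\infty] I=\sqrt[\infty]{I_\Delta}$ (diagrams given by quotient maps); the canonical maps to $h_X\times h_X=h_{X\times X}$ are induced by the quotients $C^\infty(X\times X)\to C^\infty(X\times X)/I$. *)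

From HB Require Import structures.

From mathcomp Require Import all_boot all_order all_algebra.
From mathcomp Require Import boolp classical_sets functions topology normedtype
  derive matrix_normedtype.
From mathcomp Require Import Rstruct Rstruct_topology.
From Stdlib Require Import Rdefinitions Relation_Operators.

Set Implicit Arguments.
Unset Strict Implicit.
Unset Printing Implicit Defensive.
Import Order.TTheory GRing.Theory Num.Theory.
Local Open Scope ring_scope.

Notation RR := Rdefinitions.R.

Notation Rn n := 'rV[RR]_n.

Definition ebasis (n : nat) (i : 'I_n) : Rn n := delta_mx 0 i.

Definition pd (n : nat) (i : 'I_n) (f : Rn n -> RR^o) : Rn n -> RR^o :=
  fun x => 'D_(ebasis i) f x.

Fixpoint iterpd (n : nat) (l : seq 'I_n) (f : Rn n -> RR^o) : Rn n -> RR^o :=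
  match l with
  | [::] => f
  | i :: l' => pd i (iterpd l' f)
  end.

Definition smooth_fun (n : nat) (f : Rn n -> RR^o) : Prop :=
  forall l : seq 'I_n,
    continuous (iterpd l f) /\
    forall (i : 'I_n) (x : Rn n), derivable (iterpd l f) x (ebasis i).

Definition smooth (n m : nat) (g : Rn n -> Rn m) : Prop :=
  forall j : 'I_m, smooth_fun (fun x => g x 0 j : RR^o).

Definition smap (n m : nat) := {g : Rn n -> Rn m | smooth g}.

Inductive polyf (n : nat) : (Rn n -> RR^o) -> Prop :=
| polyf_cst (c : RR) : polyf (fun _ => c)
| polyf_coord (i : 'I_n) : polyf (fun v => v 0 i)
| polyf_add f g : polyf f -> polyf g -> polyf (fun v => f v + g v)
| polyf_mul f g : polyf f -> polyf g -> polyf (fun v => f v * g v).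

Lemma coord_is_derive (n : nat) (i : 'I_n) (x v : Rn n) :
  is_derive x v (fun w : Rn n => w 0 i : RR^o) (v 0 i : RR^o).
Proof.
have @f : {linear 'M[RR]_(1, n) -> RR^o}.
  by exists (fun N : 'M[RR]_(_, _) => N 0 i); do 2![eexists]; do ?[constructor];
     rewrite ?mxE// => ? *; rewrite ?mxE//; move=> ?; rewrite !mxE.
have fc : continuous f by exact: coord_continuous.
have -> : (fun w : Rn n => w 0 i : RR^o) = f by [].
apply: DeriveDef; first exact/diff_derivable/linear_differentiable.
by rewrite deriveE ?diff_lin //; exact: linear_differentiable.
Qed.

Lemma polyf_der n f (Pf : @polyf n f) (x v : Rn n) : derivable f x v.
Proof.
elim: Pf x v => [c|i|f1 g1 _ IHf _ IHg|f1 g1 _ IHf _ IHg] x v.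
- exact: derivable_cst.
- by have [] := coord_is_derive i x v.
- exact: (derivableD (IHf x v) (IHg x v)).
- exact: (derivableM (IHf x v) (IHg x v)).
Qed.

Arguments polyf_der [n f] Pf x v.

Lemma polyf_cont n f : @polyf n f -> continuous f.
Proof.
elim=> [c|i|f1 g1 _ IHf _ IHg|f1 g1 _ IHf _ IHg] x.
- exact: cst_continuous.
- exact: coord_continuous.
- exact: (continuousD (IHf x) (IHg x)).
- exact: (continuousM (IHf x) (IHg x)).
Qed.

Lemma polyf_pd n f : @polyf n f -> forall i, polyf (pd i f).
Proof.
elim=> [c|j|f1 g1 Pf IHf Pg IHg|f1 g1 Pf IHf Pg IHg] i.
- have -> : pd i (fun _ : Rn n => c) = (fun _ => 0).
    by apply/funext => x; rewrite /pd derive_cst.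
  exact: polyf_cst.
- have -> : pd i (fun w : Rn n => w 0 j) = (fun _ => ebasis i 0 j).
    by apply/funext => x; rewrite /pd; have [_ ->] := coord_is_derive j x (ebasis i).
  exact: polyf_cst.
- have -> : pd i (fun v => f1 v + g1 v) = (fun v => pd i f1 v + pd i g1 v).
    apply/funext => x; rewrite /pd.
    by rewrite (deriveD (polyf_der Pf x _) (polyf_der Pg x _)).
  exact: polyf_add.
- have -> : pd i (fun v => f1 v * g1 v) =
            (fun v => f1 v * pd i g1 v + g1 v * pd i f1 v).
    apply/funext => x; rewrite /pd.
    by rewrite (deriveM (polyf_der Pf x _) (polyf_der Pg x _)).
  by apply: polyf_add; apply: polyf_mul.
Qed.

Lemma polyf_smooth n f : @polyf n f -> smooth_fun f.
Proof.
move=> Pf l.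
have Pl : polyf (iterpd l f) by elim: l => //= i l IH; exact: polyf_pd.
by split; [exact: polyf_cont | move=> i x; exact: polyf_der].
Qed.

Lemma smooth_row n (g : Rn n -> RR^o) : polyf g ->
  smooth (fun v => \row_(_ < 1) g v : Rn 1).
Proof.
move=> Pg j; have -> : (fun x => (\row_(_ < 1) g x : Rn 1) 0 j : RR^o) = g.
  by apply/funext => x; rewrite mxE.
exact: polyf_smooth.
Qed.

Definition i0_2 : 'I_2 := @Ordinal 2 0 isT.
Definition i1_2 : 'I_2 := @Ordinal 2 1 isT.

Definition proj (n : nat) (i : 'I_n) : smap n 1 :=
  exist _ _ (smooth_row (polyf_coord i)).
Definition cstmap (n : nat) (c : RR) : smap n 1 :=
  exist _ _ (smooth_row (@polyf_cst n c)).
Definition addmap : smap 2 1 :=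
  exist _ _ (smooth_row (polyf_add (polyf_coord i0_2) (polyf_coord i1_2))).
Definition mulmap : smap 2 1 :=
  exist _ _ (smooth_row (polyf_mul (polyf_coord i0_2) (polyf_coord i1_2))).

(* C^oo-rings: product-preserving functors from the category of the   *)
(* R^n (n >= 0) and smooth maps to sets                               *)

Record CRing := {
  cr_ob :> nat -> Type;
  cr_map : forall n m : nat, smap n m -> cr_ob n -> cr_ob m;
  cr_map_id : forall n (f : smap n n), (forall v, sval f v = v) ->
    forall x, cr_map f x = x;
  cr_map_comp : forall n m k (f : smap n m) (g : smap m k) (h : smap n k),
    (forall v, sval h v = sval g (sval f v)) ->
    forall x, cr_map h x = cr_map g (cr_map f x);
  (* product preservation: R^n = R x ... x R with projections pi_i is sent
     to a product, i.e. x |-> (F(pi_i) x)_i : F(R^n) -> F(R)^n is a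
     bijection, with inverse cr_tup *)
  cr_tup : forall n : nat, ('I_n -> cr_ob 1) -> cr_ob n;
  cr_tupK : forall n (a : 'I_n -> cr_ob 1) (i : 'I_n),
    cr_map (proj i) (cr_tup a) = a i;
  cr_projK : forall n (x : cr_ob n), cr_tup (fun i => cr_map (proj i) x) = x
}.
Arguments cr_map {c n m}.
Arguments cr_tup {c n}.

Record CHom (A B : CRing) := {
  ch :> forall n : nat, A n -> B n;
  ch_nat : forall n m (f : smap n m) (x : A n),
    ch (cr_map f x) = cr_map f (ch x)
}.
Arguments ch {A B} c n x.

Definition hid (A : CRing) : CHom A A :=
  @Build_CHom A A (fun n x => x) (fun n m f x => erefl).

Definition hcomp (A B C : CRing) (f : CHom A B) (g : CHom B C) : CHom A C.
Proof.
refine (@Build_CHom A C (fun n x => g n (f n x)) _).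
by move=> n m h x; rewrite !ch_nat.
Defined.

Definition hom_eq (A B : CRing) (f g : CHom A B) : Prop :=
  forall n (x : A n), f n x = g n x.

(* the underlying commutative R-algebra C^oo-ring A, carried by A 1    *)

Definition no_ord0 (T : Type) (i : 'I_0) : T :=
  match i with Ordinal m H => False_rect T (notF (etrans (esym (ltn0 m)) H)) end.

Definition cr_op (A : CRing) n (f : smap n 1) (a : 'I_n -> A 1) : A 1 :=
  cr_map f (cr_tup a).

Definition pair2 (T : Type) (a b : T) : 'I_2 -> T :=
  fun i => if val i == 0%N then a else b.

Definition cr_zero (A : CRing) : A 1 := cr_op (cstmap 0 0) (@no_ord0 (A 1)).
Definition cr_one (A : CRing) : A 1 := cr_op (cstmap 0 1) (@no_ord0 (A 1)).
Definition cr_add (A : CRing) (a b : A 1) : A 1 := cr_op addmap (pair2 a b).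
Definition cr_mul (A : CRing) (a b : A 1) : A 1 := cr_op mulmap (pair2 a b).
Definition cr_pow (A : CRing) (a : A 1) (k : nat) : A 1 :=
  iter k (cr_mul a) (cr_one A).

Definition set_eq (T : Type) (P Q : T -> Prop) : Prop := forall x, P x <-> Q x.
Definition subset (T : Type) (P Q : T -> Prop) : Prop := forall x, P x -> Q x.

(* ideals of the underlying R-algebra (closure under multiplication by
   constants, hence under R-scaling and negation, is included) *)
Definition is_ideal (A : CRing) (I : A 1 -> Prop) : Prop :=
  [/\ I (cr_zero A),
      forall a b, I a -> I b -> I (cr_add a b) &
      forall a b, I b -> I (cr_mul a b)].

Definition nilrad (A : CRing) (I : A 1 -> Prop) : A 1 -> Prop :=
  fun f => exists k : nat, I (cr_pow f k).

(* phi kills I, i.e. phi factors (uniquely) through A -> A/I *)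
Definition kills (A B : CRing) (phi : CHom A B) (I : A 1 -> Prop) : Prop :=
  forall a, I a -> phi 1%N a = cr_zero B.

Definition is_unit (B : CRing) (b : B 1) : Prop :=
  exists c, cr_mul b c = cr_one B.

(* sqrt^oo I = { f | (A/I){f^-1} = 0 }.  By the universal properties of
   A -> A/I and of A/I -> (A/I){f^-1}, the ring (A/I){f^-1} is the initial
   C^oo-ring under A killing I and inverting f; it is the zero ring iff
   every such C^oo-ring B is the zero ring, i.e. has 0 = 1. *)
Definition infrad (A : CRing) (I : A 1 -> Prop) : A 1 -> Prop :=
  fun f => forall (B : CRing) (psi : CHom A B),
    kills psi I -> is_unit (psi 1%N f) -> cr_zero B = cr_one B.

Definition kernel (A B : CRing) (phi : CHom A B) : A 1 -> Prop :=
  fun a => phi 1%N a = cr_zero B.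

Definition is_coproduct (X A : CRing) (i1 i2 : CHom X A) : Prop :=
  forall (B : CRing) (f g : CHom X B),
    exists h : CHom A B,
      [/\ hom_eq (hcomp i1 h) f, hom_eq (hcomp i2 h) g &
          forall h' : CHom A B, hom_eq (hcomp i1 h') f ->
            hom_eq (hcomp i2 h') g -> hom_eq h' h].

Section Colim.
Variables (Idx : Type) (le : Idx -> Idx -> Prop) (D : Idx -> Type)
  (t : forall i j, le i j -> D i -> D j).

Definition colim_gen (x y : {i : Idx & D i}) : Prop :=
  exists h : le (projT1 x) (projT1 y), projT2 y = t h (projT2 x).

Definition colim_eq : {i : Idx & D i} -> {i : Idx & D i} -> Prop :=
  clos_refl_sym_trans _ colim_gen.

(* the colimit: the quotient of the disjoint union by colim_eq,
   represented by the set of equivalence classes *)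
Definition colim : Type :=
  {P : {i : Idx & D i} -> Prop | exists x, P = colim_eq x}.

Definition colim_in (x : {i : Idx & D i}) : colim :=
  exist _ (colim_eq x) (ex_intro _ x erefl).

Definition colim_repr (c : colim) : {i : Idx & D i} :=
  proj1_sig (cid (proj2_sig c)).
End Colim.

(* the presheaves colim_{I : P I} Hom(A/I, -) on C^oo-rings            *)

(* Hom(A/I, C) = morphisms A -> C killing I *)
Definition QHom (A C : CRing) (I : A 1 -> Prop) := {phi : CHom A C | kills phi I}.

(* the index: ideals I satisfying a condition P, with an arrow J -> I when
   I is contained in J (quotient A/I -> A/J, hence Hom(A/J,-) -> Hom(A/I,-)) *)
Definition Idx (A : CRing) (P : (A 1 -> Prop) -> Prop) := {I : A 1 -> Prop | P I}.

Definition idx_le (A : CRing) (P : (A 1 -> Prop) -> Prop) (J I : Idx P) : Prop :=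
  subset (sval I) (sval J).

Definition restr (A C : CRing) (P : (A 1 -> Prop) -> Prop) (J I : Idx P)
  (h : idx_le J I) (phi : QHom C (sval J)) : QHom C (sval I) :=
  exist (fun psi : CHom A C => kills psi (sval I)) (sval phi)
    (fun a Ia => proj2_sig phi a (h a Ia)).

Definition Ncolim (A : CRing) (P : (A 1 -> Prop) -> Prop) (C : CRing) : Type :=
  @colim (Idx P) (@idx_le A P) (fun I => QHom C (sval I)) (@restr A C P).

Lemma cr0_uniq (B : CRing) (x y : B 0%N) : x = y.
Proof.
rewrite -(cr_projK x) -(cr_projK y); congr cr_tup.
by apply/funext => -[].
Qed.

Lemma hom_zero (C D : CRing) (g : CHom C D) : g 1%N (cr_zero C) = cr_zero D.
Proof.
rewrite /cr_zero /cr_op ch_nat; congr cr_map; exact: cr0_uniq.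
Qed.

Definition postcomp (A C D : CRing) (I : A 1 -> Prop) (g : CHom C D)
  (phi : QHom C I) : QHom D I.
Proof.
refine (exist _ (hcomp (sval phi) g) _).
by move=> a Ia /=; rewrite (proj2_sig phi a Ia) hom_zero.
Defined.

Definition Ncolim_map (A : CRing) (P : (A 1 -> Prop) -> Prop) (C D : CRing)
  (g : CHom C D) (c : Ncolim P C) : Ncolim P D :=
  let x := colim_repr c in
  colim_in (@restr A D P) (existT _ (projT1 x) (postcomp g (projT2 x))).

(* the canonical morphism to h_X x h_X induced by A -> A/I, where A = X (x)_oo X *)
Definition Ncolim_can (X A : CRing) (i1 i2 : CHom X A) (P : (A 1 -> Prop) -> Prop)
  (C : CRing) (c : Ncolim P C) : CHom X C * CHom X C :=
  let x := colim_repr c in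
  (hcomp i1 (sval (projT2 x)), hcomp i2 (sval (projT2 x))).

Definition P_alg (A : CRing) (IDelta : A 1 -> Prop) (I : A 1 -> Prop) : Prop :=
  is_ideal I /\ set_eq (nilrad I) (nilrad IDelta).
Definition P_inf (A : CRing) (IDelta : A 1 -> Prop) (I : A 1 -> Prop) : Prop :=
  is_ideal I /\ set_eq (infrad I) (infrad IDelta).

Definition N_alg (A : CRing) (IDelta : A 1 -> Prop) (C : CRing) : Type :=
  Ncolim (P_alg IDelta) C.
Definition N_inf (A : CRing) (IDelta : A 1 -> Prop) (C : CRing) : Type :=
  Ncolim (P_inf IDelta) C.

(* The map sends the term Hom(A/I, -) of the colimit, where √I = √I_Δ, to the
   term Hom(A/(I ∩ I_Δ), -) along the quotient A/(I ∩ I_Δ) -> A/I.  It leaves the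
   underlying morphism out of A unchanged, whence naturality and compatibility with
   the maps to h_X × h_X.  It remains to see that √∞(I ∩ I_Δ) = √∞ I_Δ, where only
   ⊇ needs an argument: if ψ kills I ∩ I_Δ and inverts f, then ψ ∘ i1 ∘ μ kills I_Δ
   and sends f to ψ f - ψ d with d = f - i1 (μ f) ∈ I_Δ ⊆ √I.  So d^(k+1) ∈ I ∩ I_Δ,
   ψ d is nilpotent and ψ f - ψ d is still invertible. *)

From HB Require Import structures.
From Pilot Require Import Defs.
From mathcomp Require Import all_boot all_algebra boolp Rstruct ring.
From Stdlib Require Import Relation_Operators.

Set Implicit Arguments.
Unset Strict Implicit.
Unset Printing Implicit Defensive.
Import GRing.Theory.
Local Open Scope ring_scope.

Inductive pexpr (n : nat) : Type :=
| PConst of RR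
| PVar of 'I_n
| PAdd of pexpr n & pexpr n
| PMul of pexpr n & pexpr n.

Fixpoint pexpr_fun n (p : pexpr n) : Rn n -> RR^o :=
  match p with
  | PConst c => fun _ => c
  | PVar i => fun v => v 0 i
  | PAdd p q => fun v => pexpr_fun p v + pexpr_fun q v
  | PMul p q => fun v => pexpr_fun p v * pexpr_fun q v
  end.

Lemma polyf_pexpr_fun n (p : pexpr n) : polyf (pexpr_fun p).
Proof.
elim: p => /= [c|i|p Pp q Pq|p Pp q Pq].
- exact: polyf_cst.
- exact: polyf_coord.
- exact: polyf_add.
- exact: polyf_mul.
Qed.

Definition pexpr_smap n (p : pexpr n) : smap n 1%N :=
  exist _ _ (smooth_row (polyf_pexpr_fun p)).

Fixpoint pexpr_subst n m (qs : 'I_m -> pexpr n) (p : pexpr m) : pexpr n :=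
  match p with
  | PConst c => PConst n c
  | PVar i => qs i
  | PAdd p q => PAdd (pexpr_subst qs p) (pexpr_subst qs q)
  | PMul p q => PMul (pexpr_subst qs p) (pexpr_subst qs q)
  end.

Lemma pexpr_fun_subst n m (qs : 'I_m -> pexpr n) p v :
  pexpr_fun (pexpr_subst qs p) v = pexpr_fun p (\row_j pexpr_fun (qs j) v).
Proof. by elim: p => //= [i|p -> q ->|p -> q ->]; rewrite ?mxE. Qed.

Definition smap_id n : smap n n :=
  exist (@smooth n n) (fun v => v) (fun j => polyf_smooth (polyf_coord j)).

Definition smap_row n m (fs : 'I_m -> smap n 1%N) : smap n m.
Proof.
refine (exist _ (fun v => \row_j sval (fs j) v 0 0) _) => j.
have -> : (fun v => (\row_j sval (fs j) v 0 0 : Rn m) 0 j : RR^o) =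
          (fun v => sval (fs j) v 0 0 : RR^o).
  by apply/funext => v; rewrite mxE.
exact: (proj2_sig (fs j)).
Defined.

Lemma pair2_map (T U : Type) (h : T -> U) p q :
  pair2 (h p) (h q) = fun i => h (pair2 p q i).
Proof. by apply/funext => i; rewrite /pair2; case: ifP. Qed.

Section CRingMaps.
Variable B : CRing.

Lemma cr_map_ext n m (f g : smap n m) (x : B n) :
  (forall v, sval f v = sval g v) -> cr_map f x = cr_map g x.
Proof.
move=> fg; rewrite (@cr_map_comp B n n m (smap_id n) g f fg x).
by rewrite (@cr_map_id B n (smap_id n) (fun v => erefl)).
Qed.

Lemma cr_tup_map n m (fs : 'I_m -> smap n 1%N) (x : B n) :
  cr_tup (fun i => cr_map (fs i) x) = cr_map (smap_row fs) x.
Proof.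
rewrite -[RHS]cr_projK; congr cr_tup; apply/funext => i.
apply: cr_map_comp => v /=.
by apply/rowP => k; rewrite !mxE (ord1 k).
Qed.

Definition cr_peval n (a : 'I_n -> B 1%N) (p : pexpr n) : B 1%N :=
  cr_op (pexpr_smap p) a.

Lemma cr_peval_var n (a : 'I_n -> B 1%N) i : cr_peval a (PVar i) = a i.
Proof. by rewrite /cr_peval /cr_op -(cr_tupK a i); apply: cr_map_ext. Qed.

Lemma cr_peval_ext n (a : 'I_n -> B 1%N) p q :
  (forall v, pexpr_fun p v = pexpr_fun q v) -> cr_peval a p = cr_peval a q.
Proof. by move=> pq; apply: cr_map_ext => v /=; apply/rowP => k; rewrite !mxE pq. Qed.

Lemma cr_op_peval n m (a : 'I_n -> B 1%N) (f : smap m 1%N) r (qs : 'I_m -> pexpr n) :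
  (forall v, sval f v = sval (pexpr_smap r) v) ->
  cr_op f (fun i => cr_peval a (qs i)) = cr_peval a (pexpr_subst qs r).
Proof.
move=> fr; rewrite /cr_op (cr_tup_map (fun i => pexpr_smap (qs i))).
rewrite -(cr_map_comp (h := pexpr_smap (pexpr_subst qs r))) // => v.
apply/rowP => k; rewrite fr !mxE pexpr_fun_subst; congr pexpr_fun.
by apply/rowP => j; rewrite !mxE.
Qed.

Definition cr_opp (x : B 1%N) : B 1%N :=
  cr_peval (fun _ : 'I_1 => x) (PMul (PConst 1%N (-1)) (PVar ord0)).

Lemma cr_add_peval n (a : 'I_n -> B 1%N) p q :
  cr_add (cr_peval a p) (cr_peval a q) = cr_peval a (PAdd p q).
Proof.
rewrite /cr_add pair2_map.
exact: (cr_op_peval a (r := PAdd (PVar i0_2) (PVar i1_2))).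
Qed.

Lemma cr_mul_peval n (a : 'I_n -> B 1%N) p q :
  cr_mul (cr_peval a p) (cr_peval a q) = cr_peval a (PMul p q).
Proof.
rewrite /cr_mul pair2_map.
exact: (cr_op_peval a (r := PMul (PVar i0_2) (PVar i1_2))).
Qed.

Lemma cr_opp_peval n (a : 'I_n -> B 1%N) p :
  cr_opp (cr_peval a p) = cr_peval a (PMul (PConst n (-1)) p).
Proof. exact: (cr_op_peval a (r := PMul (PConst 1%N (-1)) (PVar ord0)) (fun=> p)). Qed.

Lemma cr_const_peval n (a : 'I_n -> B 1%N) c :
  cr_op (cstmap 0 c) (@no_ord0 (B 1%N)) = cr_peval a (PConst n c).
Proof.
have -> : @no_ord0 (B 1%N) = fun i => cr_peval a (@no_ord0 (pexpr n) i).
  by apply/funext => -[].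
exact: (cr_op_peval a (r := PConst 0 c)).
Qed.

Lemma cr_zero_peval n (a : 'I_n -> B 1%N) : cr_zero B = cr_peval a (PConst n 0).
Proof. exact: cr_const_peval. Qed.

Lemma cr_one_peval n (a : 'I_n -> B 1%N) : cr_one B = cr_peval a (PConst n 1).
Proof. exact: cr_const_peval. Qed.

End CRingMaps.

Definition env3 (T : Type) (x y z : T) (i : 'I_3) : T :=
  if val i == 0%N then x else if val i == 1%N then y else z.

Definition o3_0 : 'I_3 := @Ordinal 3 0 isT.
Definition o3_1 : 'I_3 := @Ordinal 3 1 isT.
Definition o3_2 : 'I_3 := @Ordinal 3 2 isT.

(* Writes both sides as evaluations at (x, y, z) of polynomial expressions,
   which are then equal as soon as the polynomials agree as functions. *)
Ltac cr_ring x y z :=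
  let a := fresh "a" in
  pose a := env3 x y z;
  rewrite -?[x](cr_peval_var a o3_0) -?[y](cr_peval_var a o3_1)
          -?[z](cr_peval_var a o3_2) ?(cr_zero_peval a) ?(cr_one_peval a);
  rewrite ?(cr_add_peval, cr_mul_peval, cr_opp_peval);
  apply: cr_peval_ext => v /=; ring.

Section CRingAxioms.
Variable B : CRing.
Implicit Types x y z : B 1%N.

Lemma cr_addA x y z : cr_add x (cr_add y z) = cr_add (cr_add x y) z.
Proof. cr_ring x y z. Qed.
Lemma cr_addC x y : cr_add x y = cr_add y x.
Proof. cr_ring x y x. Qed.
Lemma cr_add0 x : cr_add (cr_zero B) x = x.
Proof. cr_ring x x x. Qed.
Lemma cr_addN x : cr_add (cr_opp x) x = cr_zero B.
Proof. cr_ring x x x. Qed.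
Lemma cr_mulA x y z : cr_mul x (cr_mul y z) = cr_mul (cr_mul x y) z.
Proof. cr_ring x y z. Qed.
Lemma cr_mulC x y : cr_mul x y = cr_mul y x.
Proof. cr_ring x y x. Qed.
Lemma cr_mul1 x : cr_mul (cr_one B) x = x.
Proof. cr_ring x x x. Qed.
Lemma cr_mulDl x y z : cr_mul (cr_add x y) z = cr_add (cr_mul x z) (cr_mul y z).
Proof. cr_ring x y z. Qed.
End CRingAxioms.

HB.instance Definition _ (B : CRing) := gen_eqMixin (B 1%N).
HB.instance Definition _ (B : CRing) := gen_choiceMixin (B 1%N).
HB.instance Definition _ (B : CRing) :=
  GRing.isZmodule.Build (B 1%N) (@cr_addA B) (@cr_addC B) (@cr_add0 B) (@cr_addN B).
HB.instance Definition _ (B : CRing) :=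
  GRing.Zmodule_isComPzRing.Build (B 1%N) (@cr_mulA B) (@cr_mulC B) (@cr_mul1 B) (@cr_mulDl B).

Lemma cr_powE (B : CRing) (x : B 1%N) k : cr_pow x k = x ^+ k.
Proof. by elim: k => // k IH; rewrite exprS -IH. Qed.

Section CHomRMorphism.
Variables (C D : CRing) (g : CHom C D).

Lemma ch_tup n (a : 'I_n -> C 1%N) : g n (cr_tup a) = cr_tup (fun i => g 1%N (a i)).
Proof.
rewrite -[LHS]cr_projK; congr cr_tup; apply/funext => i.
by rewrite -ch_nat cr_tupK.
Qed.

Lemma ch_op n (f : smap n 1%N) (a : 'I_n -> C 1%N) :
  g 1%N (cr_op f a) = cr_op f (fun i => g 1%N (a i)).
Proof. by rewrite /cr_op ch_nat ch_tup. Qed.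

Lemma ch_is_nmod_morphism : nmod_morphism (g 1%N : C 1%N -> D 1%N).
Proof.
split; first exact: hom_zero.
by move=> x y; rewrite /= ch_op -pair2_map.
Qed.

Lemma ch_is_monoid_morphism : monoid_morphism (g 1%N : C 1%N -> D 1%N).
Proof.
split; last by move=> x y; rewrite /= ch_op -pair2_map.
by rewrite /= ch_op; congr cr_op; apply/funext => -[].
Qed.

HB.instance Definition _ := GRing.isNmodMorphism.Build (C 1%N) (D 1%N)
  (g 1%N) ch_is_nmod_morphism.
HB.instance Definition _ := GRing.isMonoidMorphism.Build (C 1%N) (D 1%N)
  (g 1%N) ch_is_monoid_morphism.
End CHomRMorphism.

Lemma subr_nilpotent_invertible (R : comPzRingType) (u c n : R) m :
  u * c = 1 -> n ^+ m = 0 -> exists c', (u - n) * c' = 1.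
Proof.
move=> uc nm; exists (c * \sum_(i < m) (n * c) ^+ i).
rewrite mulrA mulrBl uc.
have := subrX1 (n * c) m; rewrite exprMn nm mul0r sub0r => /(congr1 -%R).
by rewrite opprK -mulNr opprB mulrC (mulrC n) => <-.
Qed.

Section Ideals.
Variable A : CRing.
Implicit Types I J : A 1%N -> Prop.

Lemma kernel_ideal (B : CRing) (phi : CHom A B) : is_ideal (kernel phi).
Proof.
split=> [|a b Ka Kb|a b Kb]; rewrite /kernel ?hom_zero //.
- by rewrite -[cr_add a b]/(a + b) rmorphD /= Ka Kb addr0.
- by rewrite -[cr_mul a b]/(a * b) rmorphM /= Kb mulr0.
Qed.

Lemma is_idealI I J : is_ideal I -> is_ideal J -> is_ideal (fun a => I a /\ J a).
Proof.
move=> [I0 ID IM] [J0 JD JM]; split=> // [a b [Ia Ja] [Ib Jb]|a b [Ib Jb]].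
- by split; [exact: ID|exact: JD].
- by split; [exact: IM|exact: JM].
Qed.

Lemma subset_nilrad I a : I a -> nilrad I a.
Proof. by exists 1%N; rewrite cr_powE expr1. Qed.

Lemma nilradI I J a : is_ideal I -> is_ideal J ->
  nilrad I a -> nilrad J a -> nilrad (fun b => I b /\ J b) a.
Proof.
move=> [_ _ IM] [_ _ JM] [k Ik] [l Jl]; exists (k + l)%N.
rewrite cr_powE exprD; split; last by apply: JM; rewrite -cr_powE.
by rewrite mulrC; apply: IM; rewrite -cr_powE.
Qed.

Lemma infradS I J : Defs.subset I J -> Defs.subset (infrad I) (infrad J).
Proof. by move=> IJ f If B psi psiJ; apply: If => a /IJ; exact: psiJ. Qed.
End Ideals.

Section RetractionKernel.
Variables (A X : CRing) (mu : CHom A X) (s : CHom X A).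
Hypothesis mu_s : hom_eq (hcomp s mu) (hid X).

Lemma kernel_subr_retract (f : A 1%N) : kernel mu (f - s 1%N (mu 1%N f)).
Proof. by rewrite /kernel rmorphB /= [mu 1%N (s 1%N _)]mu_s subrr. Qed.

Lemma infrad_kernel_retract J :
  Defs.subset (kernel mu) (nilrad J) -> Defs.subset (infrad (kernel mu)) (infrad J).
Proof.
move=> KJ f Kf B psi psiJ [c fc].
apply: (Kf B (hcomp mu (hcomp s psi))) => [a Ka|] /=.
  by rewrite Ka !hom_zero.
set d := f - s 1%N (mu 1%N f).
have [k Jdk] := KJ d (kernel_subr_retract f).
have psid_nil : psi 1%N d ^+ k = 0 by rewrite -rmorphXn -cr_powE; exact: psiJ.
have -> : s 1%N (mu 1%N f) = f - d by rewrite /d opprB addrC subrK.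
by rewrite rmorphB; exact: subr_nilpotent_invertible fc psid_nil.
Qed.

Lemma P_inf_meet_kernel I : P_alg (kernel mu) I ->
  P_inf (kernel mu) (fun a => I a /\ kernel mu a).
Proof.
move=> [I_ideal nilIK]; have K_ideal := kernel_ideal mu.
split; first exact: is_idealI.
move=> f; split; first by apply: infradS => a [].
apply: infrad_kernel_retract => a Ka.
by apply: nilradI => //; [apply/nilIK|]; exact: subset_nilrad.
Qed.
End RetractionKernel.

Section ColimFacts.
Variables (I : Type) (le : I -> I -> Prop) (D : I -> Type)
  (t : forall i j, le i j -> D i -> D j).

Lemma colim_in_eq x y : colim_eq t x y -> colim_in t x = colim_in t y.
Proof.
move=> xy; apply: eq_sig_hprop => [?|/=]; first exact: Prop_irrelevance.
apply/funext => z; apply/propext; split; last exact: rst_trans.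
by apply: rst_trans; exact: rst_sym.
Qed.

Lemma colim_repr_in x : colim_eq t (colim_repr (colim_in t x)) x.
Proof.
rewrite /colim_repr; case: cid => r /= xr.
by rewrite -xr; exact: rst_refl.
Qed.

Lemma colim_in_repr c : colim_in t (colim_repr c) = c.
Proof.
apply: eq_sig_hprop => [?|/=]; first exact: Prop_irrelevance.
by rewrite /colim_repr; case: cid.
Qed.
End ColimFacts.

Section ColimFunctor.
Variables (I1 I2 : Type) (le1 : I1 -> I1 -> Prop) (le2 : I2 -> I2 -> Prop)
  (D1 : I1 -> Type) (D2 : I2 -> Type)
  (t1 : forall i j, le1 i j -> D1 i -> D1 j) (t2 : forall i j, le2 i j -> D2 i -> D2 j)
  (F : {i : I1 & D1 i} -> {i : I2 & D2 i}).
Hypothesis F_gen : forall x y, colim_gen t1 x y -> colim_gen t2 (F x) (F y).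

Definition colim_fmap (c : colim t1) : colim t2 := colim_in t2 (F (colim_repr c)).

Lemma colim_eq_fmap x y : colim_eq t1 x y -> colim_eq t2 (F x) (F y).
Proof.
elim=> {x y} [x y /F_gen|x|x y _|x y z _ Fxy _ Fyz]; first exact: rst_step.
- exact: rst_refl.
- exact: rst_sym.
- exact: rst_trans Fyz.
Qed.

Lemma colim_fmap_in x : colim_fmap (colim_in t1 x) = colim_in t2 (F x).
Proof. by apply/colim_in_eq/colim_eq_fmap/colim_repr_in. Qed.
End ColimFunctor.

Section NcolimFacts.
Variables (A : CRing) (P : (A 1%N -> Prop) -> Prop).

Lemma qhom_val_inj (C : CRing) (I : A 1%N -> Prop) (phi psi : QHom C I) :
  sval phi = sval psi -> phi = psi.
Proof. by move=> ?; apply: eq_sig_hprop => // ?; exact: Prop_irrelevance. Qed.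

Lemma colim_eq_qhom_val (C : CRing) (x y : {I : Idx P & QHom C (sval I)}) :
  colim_eq (@restr A C P) x y -> sval (projT2 x) = sval (projT2 y).
Proof. elim: x y / => [[I u] [J w] [/= _ ->]|//|x y _ ->|x y z _ -> _ ->] //. Qed.

Definition qhom_post (C D : CRing) (g : CHom C D) (y : {I : Idx P & QHom C (sval I)}) :
  {I : Idx P & QHom D (sval I)} := existT _ (projT1 y) (postcomp g (projT2 y)).

Lemma qhom_post_gen (C D : CRing) (g : CHom C D) x y :
  colim_gen (@restr A C P) x y -> colim_gen (@restr A D P) (qhom_post g x) (qhom_post g y).
Proof. by case: x y => [I u] [J w] [/= IJ ->]; exists IJ; exact: qhom_val_inj. Qed.

Lemma Ncolim_map_in (C D : CRing) (g : CHom C D) y :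
  Ncolim_map g (colim_in (@restr A C P) y) = colim_in (@restr A D P) (qhom_post g y).
Proof. exact: (colim_fmap_in (@qhom_post_gen C D g)). Qed.

Lemma Ncolim_can_in (X : CRing) (i1 i2 : CHom X A) (C : CRing) y :
  Ncolim_can i1 i2 (colim_in (@restr A C P) y) =
  (hcomp i1 (sval (projT2 y)), hcomp i2 (sval (projT2 y))).
Proof. by rewrite /Ncolim_can (colim_eq_qhom_val (colim_repr_in _ _)). Qed.
End NcolimFacts.

Section MeetKernel.
Variables (X A : CRing) (i1 : CHom X A) (mu : CHom A X).
Hypothesis mu_i1 : hom_eq (hcomp i1 mu) (hid X).
Local Notation K := (kernel mu).

Definition idx_meet_kernel (I : Idx (P_alg K)) : Idx (P_inf K) :=
  exist _ (fun a => sval I a /\ K a) (P_inf_meet_kernel mu_i1 (proj2_sig I)).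

Definition qhom_meet_kernel (C : CRing) (y : {I : Idx (P_alg K) & QHom C (sval I)}) :
  {J : Idx (P_inf K) & QHom C (sval J)} :=
  let J := idx_meet_kernel (projT1 y) in
  existT _ J (exist (fun psi => kills psi (sval J)) (sval (projT2 y))
                    (fun a Ja => proj2_sig (projT2 y) a (proj1 Ja))).

Lemma qhom_meet_kernel_gen (C : CRing) x y :
  colim_gen (@restr A C _) x y ->
  colim_gen (@restr A C _) (qhom_meet_kernel x) (qhom_meet_kernel y).
Proof.
case: x y => [I u] [J w] [/= IJ ->].
by exists (fun a '(conj Ja Ka) => conj (IJ a Ja) Ka); exact: qhom_val_inj.
Qed.

Definition N_alg_to_inf (C : CRing) : N_alg K C -> N_inf K C :=
  colim_fmap (@restr A C _) (@qhom_meet_kernel C).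

Lemma N_alg_to_inf_in (C : CRing) y :
  N_alg_to_inf (colim_in (@restr A C _) y) = colim_in (@restr A C _) (qhom_meet_kernel y).
Proof. exact: (colim_fmap_in (@qhom_meet_kernel_gen C)). Qed.
End MeetKernel.

Theorem proposition3p12 (X A : CRing) (i1 i2 : CHom X A)
  (Hcop : is_coproduct i1 i2) (mu : CHom A X)
  (Hmu1 : hom_eq (hcomp i1 mu) (hid X)) (Hmu2 : hom_eq (hcomp i2 mu) (hid X)) :
  exists eta : forall C : CRing, N_alg (kernel mu) C -> N_inf (kernel mu) C,
    (forall (C D : CRing) (g : CHom C D) (x : N_alg (kernel mu) C),
        eta D (Ncolim_map g x) = Ncolim_map g (eta C x)) /\
    (forall (C : CRing) (x : N_alg (kernel mu) C),
        Ncolim_can i1 i2 (eta C x) = Ncolim_can i1 i2 x).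
Proof.
exists (N_alg_to_inf Hmu1); split=> [C D g x|C x].
- rewrite -(colim_in_repr x) Ncolim_map_in !N_alg_to_inf_in Ncolim_map_in.
  by congr colim_in; congr existT; exact: qhom_val_inj.
- by rewrite /N_alg_to_inf /colim_fmap Ncolim_can_in.
Qed.
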